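(* Suppose $\gamma=1$, i.e. $\delta=\lambda$. Then for $z\in[0,1)$, $$\mathbb{E}[z^B]=\left(\frac{1-\xi}{1-\xi/N}\right)^{N\mu/\xi}=(1-\phi y)^{\theta\frac{1-y}{y}},$$ where $\xi=\frac{q-z}{1-z}$, $y=\frac{z-q}{1-q}$, $\phi=1-\frac1N$ and $\theta=N\mu$. For $q=0$ the expression at $y=0$ is interpreted by continuity. In particular, if $q>0$, $$\mathbb{P}(B=0)=\left(1+\frac{q\phi}{1-q}\right)^{-\theta/q}.$$
   Context: Model: fix $\delta>0$, $\nu>0$ and $\alpha>\beta\ge 0$, and put $\lambda=\alpha-\beta>0$. The wild-type population is deterministic, of size $e^{\delta t}$ at time $t\ge0$. Mutants arise at the points of an inhomogeneous Poisson process on $[0,\infty)$ with intensity $\nu e^{\delta t}$. Each mutant arising at time $s$ founds a clone that evolves as a linear birth–death process started from one cell, with per-capita birth rate $\alpha$ and death rate $\beta$. Clones are independent of each other and of the Poisson process. For $N>1$ let $\tau=\log N/\delta$, and let $B$ be the total number of mutant cells alive at time $\tau$. Notation: $q=\beta/\alpha\in[0,1)$, $\gamma=\delta/\lambda$, $\mu=\nu/\alpha$. *)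

From Stdlib Require Import Reals Lra.
From Coquelicot Require Import Coquelicot.
Open Scope R_scope.

(* Transition probabilities p n t = P(Z_t = n | Z_0 = 1) of the linear
   birth-death process with per-capita birth rate al and death rate be:
   the (unique) stochastic solution of the Kolmogorov forward equations,
   started from one cell. *)
Definition lbd_forward_rhs (al be : R) (p : nat -> R -> R) (n : nat) (t : R) : R :=
  match n with
  | O => be * p 1%nat t
  | S m => al * INR m * p m t - INR n * (al + be) * p n t
           + be * INR (S n) * p (S n) t
  end.

Definition is_lbd_transition (al be : R) (p : nat -> R -> R) : Prop :=
  (forall n, p n 0 = if Nat.eqb n 1 then 1 else 0) /\
  (forall n, filterlim (p n) (at_right 0) (locally (p n 0))) /\
  (forall n t, 0 < t -> is_derive (p n) t (lbd_forward_rhs al be p n t)) /\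
  (forall n t, 0 <= t -> 0 <= p n t) /\
  (forall t, 0 <= t -> is_series (fun n => p n t) 1).

(* Mean number of mutant clones founded during [0, tau]
   (Poisson intensity nu e^{de s}). *)
Definition clone_mean (de nu tau : R) : R :=
  RInt (fun s => nu * exp (de * s)) 0 tau.

(* Law of the size at time tau of a single clone, whose founding time has
   density nu e^{de s} / clone_mean on [0, tau]. *)
Definition mark_law (de nu tau : R) (p : nat -> R -> R) (n : nat) : R :=
  RInt (fun s => nu * exp (de * s) * p n (tau - s)) 0 tau / clone_mean de nu tau.

Fixpoint conv_pow (r : nat -> R) (k : nat) (n : nat) : R :=
  match k with
  | O => if Nat.eqb n 0 then 1 else 0
  | S k' => sum_f_R0 (fun j => r j * conv_pow r k' (n - j)) n
  end.

(* P(B = n): B = sum over the Poisson points s <= tau of independent clone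
   sizes Z(tau - s), i.e. a compound Poisson sum. *)
Definition tau_of (de N : R) : R := ln N / de.

Definition law_B (de nu N : R) (p : nat -> R -> R) (n : nat) : R :=
  let tau := tau_of de N in
  let m := clone_mean de nu tau in
  Series (fun k => exp (- m) * m ^ k / INR (Factorial.fact k)
                   * conv_pow (mark_law de nu tau p) k n).

Definition pgf_B (de nu N : R) (p : nat -> R -> R) (z : R) : R :=
  Series (fun n => law_B de nu N p n * z ^ n).

(* The clone founded at time s contributes, at time tau, the generating
   function g (tau - s) of the birth-death process, where g is Kendall's
   closed form, the solution of the Riccati equation
   g' = (al g - be) (g - 1), g 0 = z.  That the forward-equation solution p
   has this generating function follows by duality: the derivative of
   t |-> sum_(n <= M) p_n(t) g(T - t)^n is only a flux across level M, of
   size O(M rho^M) with rho < 1.  The clones are the marks of a Poisson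
   process, so B is compound Poisson and
   E[z^B] = exp (int_0^tau nu e^(de s) (g (tau - s) - 1) ds).
   When de = al - be the weight cancels the clone growth, the integrand has
   an explicit logarithmic primitive, and e^(de tau) = N turns the result
   into the stated closed forms. *)

From Stdlib Require Import Reals Lra Lia.
From Coquelicot Require Import Coquelicot.
Open Scope R_scope.

Lemma sum_n_nonneg (a : nat -> R) n : (forall k, 0 <= a k) -> 0 <= sum_n a n.
Proof.
  intros Ha. induction n as [|n IH].
  - now rewrite sum_O.
  - rewrite sum_Sn. specialize (Ha (S n)). unfold plus; simpl; lra.
Qed.

Lemma sum_n_le_is_series (a : nat -> R) l n :
  (forall k, 0 <= a k) -> is_series a l -> sum_n a n <= l.
Proof.
  intros Ha Hs. apply (is_lim_seq_incr_compare (sum_n a) l Hs).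
  intros k. rewrite sum_Sn. specialize (Ha (S k)). unfold plus; simpl; lra.
Qed.

Lemma is_series_term_le (a : nat -> R) l n :
  (forall k, 0 <= a k) -> is_series a l -> a n <= l.
Proof.
  intros Ha Hs. apply Rle_trans with (sum_n a n); [|exact (sum_n_le_is_series a l n Ha Hs)].
  destruct n as [|n].
  - rewrite sum_O; lra.
  - rewrite sum_Sn. assert (0 <= sum_n a n) by now apply sum_n_nonneg.
    unfold plus; simpl; lra.
Qed.

Lemma is_lim_seq_sum_n (u : nat -> nat -> R) (l : nat -> R) n :
  (forall k, is_lim_seq (fun K => u K k) (l k)) ->
  is_lim_seq (fun K => sum_n (u K) n) (sum_n l n).
Proof.
  intros H. induction n as [|n IH].
  - rewrite sum_O. eapply is_lim_seq_ext; [|apply H]. intros; now rewrite sum_O.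
  - rewrite sum_Sn. eapply is_lim_seq_ext; [|exact (is_lim_seq_plus' _ _ _ _ IH (H (S n)))].
    intros; now rewrite sum_Sn.
Qed.

Lemma is_series_nonneg (a : nat -> R) l : (forall n, 0 <= a n) -> is_series a l -> 0 <= l.
Proof.
  intros Ha Hs. apply Rle_trans with (sum_n a 0); [rewrite sum_O; apply Ha|].
  now apply sum_n_le_is_series.
Qed.

Lemma is_series_swap_nonneg (b : nat -> nat -> R) (L S : nat -> R) s :
  (forall k n, 0 <= b k n) ->
  (forall n, is_series (fun k => b k n) (L n)) ->
  (forall k, is_series (fun n => b k n) (S k)) ->
  is_series S s -> is_series L s.
Proof.
  intros Hb HL HS Hs.
  assert (HSnn : forall k, 0 <= S k) by (intros k; exact (is_series_nonneg _ _ (Hb k) (HS k))).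
  assert (Hup : forall N, sum_n L N <= s).
  { intros N. apply (is_lim_seq_le (fun K => sum_n (fun n => sum_n (fun k => b k n) K) N)
      (fun _ => s) (sum_n L N) s); [| |apply is_lim_seq_const].
    - intros K. rewrite (sum_n_switch (fun n k => b k n)).
      apply Rle_trans with (sum_n S K); [|now apply sum_n_le_is_series].
      apply sum_n_m_le. intros k. now apply sum_n_le_is_series.
    - apply (is_lim_seq_sum_n (fun K n => sum_n (fun k => b k n) K)). intros n. apply HL. }
  assert (Hlo : forall K N, sum_n (fun k => sum_n (fun n => b k n) N) K <= sum_n L N).
  { intros K N. rewrite <- (sum_n_switch (fun n k => b k n)).
    apply sum_n_m_le. intros n. now apply sum_n_le_is_series. }
  change (is_lim_seq (sum_n L) s). apply is_lim_seq_spec. intros eps.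
  assert (e2 : 0 < eps / 2) by (destruct eps; simpl; lra).
  destruct (proj2 (is_lim_seq_spec (sum_n S) s) Hs (mkposreal _ e2)) as [K HK].
  specialize (HK K (le_n K)); simpl in HK.
  assert (HSK : is_lim_seq (fun N => sum_n (fun k => sum_n (fun n => b k n) N) K) (sum_n S K))
    by (apply (is_lim_seq_sum_n (fun N k => sum_n (fun n => b k n) N)); intros k; apply HS).
  destruct (proj2 (is_lim_seq_spec _ _) HSK (mkposreal _ e2)) as [N0 HN0].
  exists N0. intros N HN. specialize (HN0 N HN); simpl in HN0.
  specialize (Hlo K N). specialize (Hup N).
  apply Rabs_lt_between in HK. apply Rabs_lt_between in HN0.
  apply Rabs_lt_between. split; lra.
Qed.

Lemma is_lim_seq_abs_bound (u e : nat -> R) l :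
  (forall M, (1 <= M)%nat -> Rabs (u M - l) <= e M) -> is_lim_seq e 0 -> is_lim_seq u l.
Proof.
  intros Hb He.
  apply is_lim_seq_le_le_loc with (u := fun M => l - e M) (w := fun M => l + e M).
  - exists 1%nat. intros M HM. specialize (Hb M HM). apply Rabs_le_between in Hb. lra.
  - replace (Finite l) with (Finite (l - 0)) by (f_equal; ring).
    apply is_lim_seq_minus'; [apply is_lim_seq_const | exact He].
  - replace (Finite l) with (Finite (l + 0)) by (f_equal; ring).
    apply is_lim_seq_plus'; [apply is_lim_seq_const | exact He].
Qed.

Lemma is_lim_seq_succ_mult_pow_pos r : 0 < r < 1 -> is_lim_seq (fun n => INR (S n) * r ^ n) 0.
Proof.
  intros Hr. apply ex_series_lim_0, ex_series_Rabs, ex_series_DAlembert with (k := r); [lra| |].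
  - intros n. apply Rgt_not_eq, Rmult_lt_0_compat; [apply lt_0_INR; lia | apply pow_lt; lra].
  - apply is_lim_seq_ext with (u := fun n => (1 + / INR (S n)) * r).
    { intros n. assert (0 < INR (S n)) by (apply lt_0_INR; lia).
      assert (0 < r ^ n) by (apply pow_lt; lra).
      rewrite Rabs_right.
      - rewrite (S_INR (S n)). simpl pow. field. lra.
      - apply Rle_ge, Rmult_le_pos.
        + apply Rmult_le_pos; [apply pos_INR | simpl; apply Rmult_le_pos; lra].
        + apply Rlt_le, Rinv_0_lt_compat, Rmult_lt_0_compat; lra. }
    replace (Finite r) with (Finite ((1 + 0) * r)) by (f_equal; ring).
    apply is_lim_seq_mult'; [|apply is_lim_seq_const].
    apply is_lim_seq_plus'; [apply is_lim_seq_const|].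
    apply (is_lim_seq_incr_1 (fun n => / INR n)).
    exact (is_lim_seq_inv INR p_infty is_lim_seq_INR ltac:(discriminate)).
Qed.

Lemma is_lim_seq_succ_mult_pow r : 0 <= r < 1 -> is_lim_seq (fun n => INR (S n) * r ^ n) 0.
Proof.
  intros Hr.
  apply is_lim_seq_le_le with (u := fun _ => 0) (w := fun n => INR (S n) * ((1 + r) / 2) ^ n).
  - intros n. split.
    + apply Rmult_le_pos; [apply pos_INR | apply pow_le; lra].
    + apply Rmult_le_compat_l; [apply pos_INR | apply pow_incr; lra].
  - apply is_lim_seq_const.
  - apply is_lim_seq_succ_mult_pow_pos. lra.
Qed.

Lemma is_series_exp x : is_series (fun k => x ^ k / INR (Factorial.fact k)) (exp x).
Proof.
  eapply is_series_ext; [|exact (is_exp_Reals x)].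
  intros n. simpl. rewrite pow_n_pow. unfold scal; simpl; unfold mult; simpl. unfold Rdiv. ring.
Qed.

Lemma is_series_head (a : nat -> R) : (forall n, a (S n) = 0) -> is_series a (a 0%nat).
Proof.
  intros Ha. change (is_lim_seq (sum_n a) (a 0%nat)).
  eapply is_lim_seq_ext; [|apply is_lim_seq_const]. intros n. induction n as [|n IH].
  - now rewrite sum_O.
  - rewrite sum_Sn, <- IH, Ha. unfold plus; simpl. ring.
Qed.

Lemma ex_series_Rabs_nonneg (a : nat -> R) l :
  (forall n, 0 <= a n) -> is_series a l -> ex_series (fun n => Rabs (a n)).
Proof.
  intros Ha Hs. eapply ex_series_ext; [|exists l; exact Hs].
  intros n. rewrite Rabs_right; [reflexivity | apply Rle_ge, Ha].
Qed.

Section ConvolutionPowers.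

Variable r : nat -> R.
Hypothesis r_nonneg : forall n, 0 <= r n.

Lemma conv_pow_nonneg k n : 0 <= conv_pow r k n.
Proof.
  revert n. induction k as [|k IH]; intros n; simpl.
  - destruct (n =? 0)%nat; lra.
  - apply cond_pos_sum. intros j. now apply Rmult_le_pos.
Qed.

Lemma is_series_conv_pow z Rz : 0 <= z ->
  is_series (fun n => r n * z ^ n) Rz -> forall k,
  is_series (fun n => conv_pow r k n * z ^ n) (Rz ^ k).
Proof.
  intros Hz HR k. induction k as [|k IH].
  - replace (Rz ^ 0) with (conv_pow r 0 0 * z ^ 0) by (simpl; ring).
    apply (is_series_head (fun n => conv_pow r 0 n * z ^ n)). intros n; simpl; ring.
  - assert (Hnn : forall (a : nat -> R) n, (forall n, 0 <= a n) -> 0 <= a n * z ^ n)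
      by (intros a n Ha; apply Rmult_le_pos; [apply Ha | now apply pow_le]).
    assert (H := is_series_mult _ _ _ _ HR IH
      (ex_series_Rabs_nonneg _ _ (fun n => Hnn r n r_nonneg) HR)
      (ex_series_Rabs_nonneg _ _ (fun n => Hnn _ n (conv_pow_nonneg k)) IH)).
    simpl pow. eapply is_series_ext; [|exact H].
    intros n. simpl. rewrite Rmult_comm, scal_sum. apply sum_eq. intros j Hj.
    replace (z ^ n) with (z ^ j * z ^ (n - j)); [ring|].
    rewrite <- pow_add. f_equal. lia.
Qed.

End ConvolutionPowers.

Definition poisson_weight (m : R) k := exp (- m) * m ^ k / INR (Factorial.fact k).

Lemma poisson_weight_nonneg m k : 0 <= m -> 0 <= poisson_weight m k.
Proof.
  intros Hm. unfold poisson_weight. apply Rmult_le_pos.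
  - apply Rmult_le_pos; [apply Rlt_le, exp_pos | now apply pow_le].
  - apply Rlt_le, Rinv_0_lt_compat, INR_fact_lt_0.
Qed.

Lemma is_series_poisson_weight m x :
  is_series (fun k => poisson_weight m k * x ^ k) (exp (m * (x - 1))).
Proof.
  replace (exp (m * (x - 1))) with (exp (- m) * exp (m * x))
    by (rewrite <- exp_plus; f_equal; ring).
  eapply is_series_ext; [|exact (is_series_scal_l (exp (- m)) _ _ (is_series_exp (m * x)))].
  intros k. unfold poisson_weight, scal; simpl; unfold mult; simpl.
  rewrite Rpow_mult_distr. unfold Rdiv. ring.
Qed.

(* Convergence at some [z0 > 0] bounds [conv_pow r k n] by [R0 ^ k / z0 ^ n],
   which makes the inner Poisson series converge. *)
Lemma is_series_compound_poisson r m z Rz z0 R0 :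
  (forall n, 0 <= r n) -> 0 <= z -> 0 <= m -> 0 < z0 ->
  is_series (fun n => r n * z ^ n) Rz ->
  is_series (fun n => r n * z0 ^ n) R0 ->
  is_series (fun n => Series (fun k => poisson_weight m k * conv_pow r k n) * z ^ n)
    (exp (m * (Rz - 1))).
Proof.
  intros Hr Hz Hm Hz0 HR HR0.
  assert (Hw := fun k => poisson_weight_nonneg m k Hm).
  assert (Hc := conv_pow_nonneg r Hr).
  apply (is_series_swap_nonneg (fun k n => poisson_weight m k * conv_pow r k n * z ^ n) _
           (fun k => poisson_weight m k * Rz ^ k)).
  - intros k n. apply Rmult_le_pos; [apply Rmult_le_pos; auto | now apply pow_le].
  - intros n. apply is_series_scal_r. apply Series_correct.
    apply (ex_series_le (K := R_AbsRing) (V := R_CompleteNormedModule))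
      with (b := fun k => / z0 ^ n * (poisson_weight m k * R0 ^ k)).
    + intros k. unfold norm; simpl; unfold abs; simpl.
      rewrite Rabs_right by (apply Rle_ge, Rmult_le_pos; auto).
      assert (Hzn : 0 < z0 ^ n) by now apply pow_lt.
      assert (Hck : conv_pow r k n * z0 ^ n <= R0 ^ k).
      { apply (is_series_term_le (fun n => conv_pow r k n * z0 ^ n)).
        - intros j. apply Rmult_le_pos; [apply Hc | apply pow_le; lra].
        - apply is_series_conv_pow; auto; lra. }
      replace (/ z0 ^ n * (poisson_weight m k * R0 ^ k))
        with (poisson_weight m k * (R0 ^ k / z0 ^ n)) by (field; lra).
      apply Rmult_le_compat_l; [auto|].
      apply Rmult_le_reg_r with (z0 ^ n); [exact Hzn|].
      unfold Rdiv. rewrite Rmult_assoc, Rinv_l; lra.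
    + eexists. exact (is_series_scal_l (/ z0 ^ n) _ _ (is_series_poisson_weight m R0)).
  - intros k. eapply is_series_ext;
      [|exact (is_series_scal_l (poisson_weight m k) _ _ (is_series_conv_pow r Hr z Rz Hz HR k))].
    intros n; unfold scal; simpl; unfold mult; simpl; ring.
  - apply is_series_poisson_weight.
Qed.

Lemma exp_ge_1 c t : 0 <= c -> 0 <= t -> 1 <= exp (c * t).
Proof.
  intros Hc Ht. rewrite <- exp_0. destruct (Req_dec (c * t) 0) as [->|Hct]; [lra|].
  left. apply exp_increasing. assert (0 <= c * t) by nra. lra.
Qed.

Definition lbd_pgf_denom (al be z t : R) :=
  al * (1 - z) * exp ((al - be) * t) + al * z - be.

Definition lbd_pgf (al be z t : R) :=
  1 - (al - be) * (1 - z) * exp ((al - be) * t) / lbd_pgf_denom al be z t.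

(* The limit of [lbd_pgf al be z t] as [t -> oo]: a bound uniform in [t]. *)
Definition lbd_pgf_sup (al be z : R) := 1 - (al - be) * (1 - z) / al.

Section BirthDeathPgf.

Variables al be z : R.
Hypothesis rates : 0 <= be < al.
Hypothesis z_range : 0 <= z < 1.

Lemma lbd_pgf_denom_pos t : 0 <= t -> 0 < lbd_pgf_denom al be z t.
Proof.
  intros Ht. unfold lbd_pgf_denom.
  assert (1 <= exp ((al - be) * t)) by (apply exp_ge_1; lra).
  assert (0 <= al * (1 - z) * (exp ((al - be) * t) - 1)) by (apply Rmult_le_pos; nra).
  nra.
Qed.

Lemma lbd_pgf_sup_lt_1 : lbd_pgf_sup al be z < 1.
Proof.
  unfold lbd_pgf_sup. assert (0 < (al - be) * (1 - z) / al) by (apply Rdiv_lt_0_compat; nra).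
  lra.
Qed.

Lemma lbd_pgf_range t : 0 <= t -> 0 <= lbd_pgf al be z t <= lbd_pgf_sup al be z.
Proof.
  intros Ht. assert (HK := lbd_pgf_denom_pos t Ht).
  assert (HE : 1 <= exp ((al - be) * t)) by (apply exp_ge_1; lra).
  unfold lbd_pgf, lbd_pgf_sup. unfold lbd_pgf_denom in *.
  set (E := exp ((al - be) * t)) in *. set (K := al * (1 - z) * E + al * z - be) in *.
  split.
  - assert ((al - be) * (1 - z) * E <= K).
    { assert (0 <= be * (1 - z) * (E - 1)) by (apply Rmult_le_pos; nra). unfold K; nra. }
    assert ((al - be) * (1 - z) * E / K <= 1).
    { apply Rmult_le_reg_r with K; [lra|]. unfold Rdiv. rewrite Rmult_assoc, Rinv_l; lra. }
    lra.
  - assert (K <= al * E).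
    { assert (0 <= al * z * (E - 1)) by (apply Rmult_le_pos; nra). unfold K; nra. }
    assert ((al - be) * (1 - z) / al <= (al - be) * (1 - z) * E / K).
    { assert (0 <= (al - be) * (1 - z)) by nra.
      apply Rmult_le_reg_r with (al * K); [nra|].
      replace ((al - be) * (1 - z) / al * (al * K)) with ((al - be) * (1 - z) * K)
        by (field; lra).
      replace ((al - be) * (1 - z) * E / K * (al * K)) with ((al - be) * (1 - z) * (al * E))
        by (field; lra).
      now apply Rmult_le_compat_l. }
    lra.
Qed.

Lemma lbd_pgf_0 : lbd_pgf al be z 0 = z.
Proof. unfold lbd_pgf, lbd_pgf_denom. rewrite Rmult_0_r, exp_0. field. nra. Qed.

Lemma is_derive_lbd_pgf t : 0 <= t ->
  is_derive (lbd_pgf al be z) t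
    ((al * lbd_pgf al be z t - be) * (lbd_pgf al be z t - 1)).
Proof.
  intros Ht. assert (HK := lbd_pgf_denom_pos t Ht).
  unfold lbd_pgf. unfold lbd_pgf_denom in *. auto_derive; [lra | field; lra].
Qed.

Lemma continuous_lbd_pgf t : 0 <= t -> continuous (lbd_pgf al be z) t.
Proof.
  intros Ht. apply (ex_derive_continuous (V := R_NormedModule)).
  eexists. now apply is_derive_lbd_pgf.
Qed.

End BirthDeathPgf.

(* [p] extended constantly to [t < 0], so that it is continuous at [0]
   from both sides. *)
Definition p_ext (p : nat -> R -> R) n t := p n (Rmax t 0).

Lemma p_ext_eq p n t : 0 <= t -> p_ext p n t = p n t.
Proof. intros Ht. unfold p_ext. now rewrite Rmax_left. Qed.

Section Transition.

Variables (al be : R) (p : nat -> R -> R).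
Hypothesis Hp : is_lbd_transition al be p.

Lemma lbd_transition_bounds n t : 0 <= t -> 0 <= p n t <= 1.
Proof.
  intros Ht. destruct Hp as [_ [_ [_ [Hnn Hsum]]]]. split; [now apply Hnn|].
  apply (is_series_term_le (fun k => p k t)); [intros; now apply Hnn | now apply Hsum].
Qed.

Lemma p_ext_bounds n t : 0 <= p_ext p n t <= 1.
Proof. apply lbd_transition_bounds, Rmax_r. Qed.

Lemma continuous_p_ext n x : 0 <= x -> continuous (p_ext p n) x.
Proof.
  intros Hx. destruct Hp as [_ [Hright [Hder _]]].
  destruct (Req_dec x 0) as [->|Hx0].
  - apply filterlim_locally. intros eps.
    assert (H := proj1 (filterlim_locally _ _) (Hright n) eps).
    unfold at_right, within in H. revert H. apply filter_imp. intros y Hy. unfold p_ext.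
    rewrite (Rmax_left 0 0) by lra. destruct (Rlt_dec 0 y).
    + rewrite Rmax_left by lra. now apply Hy.
    + rewrite Rmax_right by lra. apply ball_center.
  - apply continuous_ext_loc with (g := p n).
    + generalize (open_gt 0 x ltac:(lra)). apply filter_imp. intros y Hy. symmetry. apply p_ext_eq. lra.
    + apply (ex_derive_continuous (V := R_NormedModule)). eexists. apply Hder. lra.
Qed.

Lemma is_derive_p_ext n t : 0 < t ->
  is_derive (p_ext p n) t (lbd_forward_rhs al be (p_ext p) n t).
Proof.
  intros Ht. destruct Hp as [_ [_ [Hder _]]].
  apply is_derive_ext_loc with (f := p n).
  - generalize (open_gt 0 t Ht). apply filter_imp. intros y Hy. symmetry. apply p_ext_eq. lra.
  - replace (lbd_forward_rhs al be (p_ext p) n t) with (lbd_forward_rhs al be p n t)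
      by (unfold lbd_forward_rhs; destruct n; rewrite !p_ext_eq; lra).
    now apply Hder.
Qed.

End Transition.

Definition duality_sum al be z (p : nat -> R -> R) T M t :=
  sum_n (fun n => p_ext p n t * lbd_pgf al be z (T - t) ^ n) M.

Definition duality_flux al be z (p : nat -> R -> R) T M t :=
  - al * INR M * p_ext p M t * lbd_pgf al be z (T - t) ^ S M
  + be * INR (S M) * p_ext p (S M) t * lbd_pgf al be z (T - t) ^ M.

Definition pgf_error al be z M := (al + be) * (INR (S M) * lbd_pgf_sup al be z ^ M).

Section Duality.

Variables (al be z : R) (p : nat -> R -> R).
Hypothesis rates : 0 <= be < al.
Hypothesis z_range : 0 <= z < 1.
Hypothesis Hp : is_lbd_transition al be p.
Variable T : R.

Lemma is_derive_lbd_pgf_rev t : t <= T ->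
  is_derive (fun s => lbd_pgf al be z (T - s)) t
    (- ((al * lbd_pgf al be z (T - t) - be) * (lbd_pgf al be z (T - t) - 1))).
Proof.
  intros Ht.
  replace (- ((al * lbd_pgf al be z (T - t) - be) * (lbd_pgf al be z (T - t) - 1)))
    with (scal (-1) ((al * lbd_pgf al be z (T - t) - be) * (lbd_pgf al be z (T - t) - 1)))
    by (unfold scal; simpl; unfold mult; simpl; ring).
  apply (is_derive_comp (lbd_pgf al be z) (fun s => T - s)).
  - apply is_derive_lbd_pgf; lra.
  - auto_derive; auto.
Qed.

(* Along [t |-> g (T - t)], the forward equations for [p] and the backward
   (Riccati) equation for [g] cancel term by term, so the derivative of the
   truncated sum is only the probability flux across level [M]. *)
Lemma is_derive_duality_sum M t : 0 < t -> t <= T ->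
  is_derive (duality_sum al be z p T M) t (duality_flux al be z p T M t).
Proof.
  intros Ht HtT. assert (HG := is_derive_lbd_pgf_rev t HtT).
  set (G := lbd_pgf al be z (T - t)) in *.
  induction M as [|M IH].
  - apply is_derive_ext with (f := p_ext p 0).
    { intros s. unfold duality_sum. rewrite sum_O. simpl. ring. }
    replace (duality_flux al be z p T 0 t) with (be * p_ext p 1 t)
      by (unfold duality_flux; simpl; ring).
    exact (is_derive_p_ext al be p Hp 0 t Ht).
  - apply is_derive_ext with (f := fun s => duality_sum al be z p T M s
        + p_ext p (S M) s * lbd_pgf al be z (T - s) ^ S M).
    { intros s. unfold duality_sum. now rewrite sum_Sn. }
    eapply is_derive_ext; [reflexivity|].
    replace (duality_flux al be z p T (S M) t) with
      (duality_flux al be z p T M t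
       + (lbd_forward_rhs al be (p_ext p) (S M) t * G ^ S M
          + p_ext p (S M) t * (INR (S M) * - ((al * G - be) * (G - 1)) * G ^ pred (S M))))
      by (unfold duality_flux, lbd_forward_rhs; fold G; simpl pred; rewrite !S_INR;
          simpl pow; ring).
    apply (is_derive_plus (V := R_NormedModule)); [exact IH|].
    apply Derive.is_derive_mult; [now apply is_derive_p_ext|].
    now apply is_derive_pow.
Qed.

Lemma continuous_duality_sum M x : 0 <= x -> x <= T ->
  continuous (duality_sum al be z p T M) x.
Proof.
  intros Hx HxT.
  assert (Hterm : forall n, continuous (fun t => p_ext p n t * lbd_pgf al be z (T - t) ^ n) x).
  { intros n. apply (continuous_mult (K := R_AbsRing)); [now apply (continuous_p_ext al be)|].
    apply (ex_derive_continuous (V := R_NormedModule)).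
    eexists. now apply is_derive_pow, is_derive_lbd_pgf_rev. }
  induction M as [|M IH].
  - eapply continuous_ext; [|exact (Hterm 0%nat)].
    intros t. unfold duality_sum. now rewrite sum_O.
  - apply continuous_ext with (f := fun t => plus (duality_sum al be z p T M t)
        (p_ext p (S M) t * lbd_pgf al be z (T - t) ^ S M)).
    { intros t. unfold duality_sum. now rewrite sum_Sn. }
    now apply (continuous_plus (V := R_NormedModule)).
Qed.

Lemma duality_flux_bound M t : t <= T ->
  Rabs (duality_flux al be z p T M t) <= pgf_error al be z M.
Proof.
  intros Ht. unfold duality_flux, pgf_error.
  destruct (lbd_pgf_range al be z rates z_range (T - t) ltac:(lra)) as [G0 G1].
  assert (Hr1 := lbd_pgf_sup_lt_1 al be z rates z_range).
  set (G := lbd_pgf al be z (T - t)) in *. set (r := lbd_pgf_sup al be z) in *.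
  assert (Hpow : forall P, 0 <= P <= 1 -> 0 <= P * G ^ M <= r ^ M).
  { intros P HP. split; [apply Rmult_le_pos; [lra | now apply pow_le]|].
    replace (r ^ M) with (1 * r ^ M) by ring.
    apply Rmult_le_compat; [lra | now apply pow_le | lra | apply pow_incr; lra]. }
  destruct (Hpow (p_ext p M t * G)) as [A0 A1].
  { destruct (p_ext_bounds al be p Hp M t). split; [now apply Rmult_le_pos | nra]. }
  destruct (Hpow (p_ext p (S M) t)) as [B0 B1]; [exact (p_ext_bounds al be p Hp (S M) t)|].
  assert (HM : 0 <= INR M <= INR (S M)) by (split; [apply pos_INR | apply le_INR; lia]).
  replace (- al * INR M * p_ext p M t * G ^ S M + be * INR (S M) * p_ext p (S M) t * G ^ M)
    with (be * INR (S M) * (p_ext p (S M) t * G ^ M) - al * INR M * (p_ext p M t * G * G ^ M))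
    by (simpl; ring).
  set (A := p_ext p M t * G * G ^ M) in *. set (B := p_ext p (S M) t * G ^ M) in *.
  assert (0 <= r ^ M) by lra.
  assert (0 <= be * INR (S M) * B <= be * INR (S M) * r ^ M)
    by (split; [apply Rmult_le_pos | apply Rmult_le_compat_l]; nra).
  assert (0 <= al * INR M * A <= al * INR (S M) * r ^ M).
  { split; [apply Rmult_le_pos; nra|].
    apply Rmult_le_compat; [nra | lra | apply Rmult_le_compat_l; lra | lra]. }
  apply Rabs_le. split; nra.
Qed.

Lemma lbd_pgf_partial_sum_error M : 0 <= T -> (1 <= M)%nat ->
  Rabs (sum_n (fun n => p n T * z ^ n) M - lbd_pgf al be z T) <= T * pgf_error al be z M.
Proof.
  intros HT HM.
  assert (Hs0 : duality_sum al be z p T M 0 = lbd_pgf al be z T).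
  { destruct Hp as [Hinit _]. unfold duality_sum. rewrite Rminus_0_r.
    induction HM as [|M HM IH].
    - rewrite sum_Sn, sum_O. unfold plus; simpl. rewrite !p_ext_eq, !Hinit by lra. simpl. ring.
    - rewrite sum_Sn, IH. unfold plus; simpl. rewrite p_ext_eq, Hinit by lra.
      destruct M; [lia | simpl; ring]. }
  assert (HsT : duality_sum al be z p T M T = sum_n (fun n => p n T * z ^ n) M).
  { apply sum_n_ext. intros n. rewrite Rminus_diag, lbd_pgf_0 by auto.
    now rewrite p_ext_eq. }
  rewrite <- HsT, <- Hs0.
  destruct (MVT_gen (duality_sum al be z p T M) 0 T (duality_flux al be z p T M))
    as [c [Hc Heq]]; rewrite Rmin_left, Rmax_right in * by lra.
  - intros x Hx. apply is_derive_duality_sum; lra.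
  - intros x Hx. apply continuity_pt_filterlim, continuous_duality_sum; lra.
  - rewrite Heq, Rabs_mult, Rminus_0_r, (Rabs_right T), Rmult_comm by lra.
    apply Rmult_le_compat_l; [lra|]. apply duality_flux_bound. lra.
Qed.

Lemma lbd_pgf_sup_range : 0 <= lbd_pgf_sup al be z < 1.
Proof.
  split; [|now apply lbd_pgf_sup_lt_1].
  destruct (lbd_pgf_range al be z rates z_range 0 (Rle_refl 0)). lra.
Qed.

Lemma pgf_error_nonneg M : 0 <= pgf_error al be z M.
Proof.
  unfold pgf_error. apply Rmult_le_pos; [lra|].
  apply Rmult_le_pos; [apply pos_INR | apply pow_le, lbd_pgf_sup_range].
Qed.

Lemma is_lim_seq_pgf_error : is_lim_seq (pgf_error al be z) 0.
Proof.
  replace (Finite 0) with (Rbar_mult (al + be) 0) by (simpl; f_equal; ring).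
  apply is_lim_seq_scal_l, is_lim_seq_succ_mult_pow, lbd_pgf_sup_range.
Qed.

Lemma is_series_lbd_transition_pgf : 0 <= T ->
  is_series (fun n => p n T * z ^ n) (lbd_pgf al be z T).
Proof.
  intros HT. apply (is_lim_seq_abs_bound _ (fun M => T * pgf_error al be z M)).
  - intros M HM. now apply lbd_pgf_partial_sum_error.
  - replace (Finite 0) with (Rbar_mult T 0) by (simpl; f_equal; ring).
    apply is_lim_seq_scal_l, is_lim_seq_pgf_error.
Qed.

End Duality.

Lemma is_RInt_sum_n (f : nat -> R -> R) (I : nat -> R) a b M :
  (forall n, is_RInt (f n) a b (I n)) ->
  is_RInt (fun s => sum_n (fun n => f n s) M) a b (sum_n I M).
Proof.
  intros H. induction M as [|M IH].
  - rewrite sum_O. eapply is_RInt_ext; [|apply (H 0%nat)]. intros; now rewrite sum_O.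
  - rewrite sum_Sn. eapply is_RInt_ext; [|exact (is_RInt_plus _ _ _ _ _ _ IH (H (S M)))].
    intros; now rewrite sum_Sn.
Qed.

Lemma is_RInt_mult_r (f : R -> R) a b I c :
  is_RInt f a b I -> is_RInt (fun s => f s * c) a b (I * c).
Proof.
  intros H. replace (I * c) with (scal c I) by (unfold scal; simpl; unfold mult; simpl; ring).
  eapply is_RInt_ext; [|exact (is_RInt_scal _ _ _ c _ H)].
  intros; unfold scal; simpl; unfold mult; simpl; ring.
Qed.

Lemma is_lim_seq_RInt_abs_bound (f : nat -> R -> R) (I e : nat -> R) g a b :
  a <= b -> (forall M, is_RInt (f M) a b (I M)) -> ex_RInt g a b ->
  (forall M, (1 <= M)%nat -> forall x, a <= x <= b -> Rabs (f M x - g x) <= e M) ->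
  is_lim_seq e 0 -> is_lim_seq I (RInt g a b).
Proof.
  intros Hab HI Hg Hb He. apply (is_lim_seq_abs_bound _ (fun M => (b - a) * e M)).
  - intros M HM.
    assert (Hd : is_RInt (fun x => f M x - g x) a b (I M - RInt g a b))
      by exact (is_RInt_minus _ _ _ _ _ _ (HI M) (RInt_correct _ _ _ Hg)).
    rewrite <- (is_RInt_unique _ _ _ _ Hd).
    apply abs_RInt_le_const; [exact Hab | eexists; exact Hd | now apply Hb].
  - replace (Finite 0) with (Rbar_mult (b - a) 0) by (simpl; f_equal; ring).
    now apply is_lim_seq_scal_l.
Qed.

Lemma continuous_weighted nu de tau (h : R -> R) s :
  continuous h (tau - s) -> continuous (fun s => nu * exp (de * s) * h (tau - s)) s.
Proof.
  intros Hh. apply (continuous_mult (K := R_AbsRing)).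
  - apply (ex_derive_continuous (V := R_NormedModule)). auto_derive. auto.
  - apply (continuous_comp (fun s => tau - s) h); [|exact Hh].
    apply (ex_derive_continuous (V := R_NormedModule)). auto_derive. auto.
Qed.

Section MarkLaw.

Variables (al be z : R) (p : nat -> R -> R) (de nu tau : R).
Hypothesis rates : 0 <= be < al.
Hypothesis z_range : 0 <= z < 1.
Hypothesis Hp : is_lbd_transition al be p.
Hypothesis de_nonneg : 0 <= de.
Hypothesis nu_pos : 0 < nu.
Hypothesis tau_nonneg : 0 <= tau.

Lemma ex_RInt_weighted_transition n :
  ex_RInt (fun s => nu * exp (de * s) * p n (tau - s)) 0 tau.
Proof.
  apply ex_RInt_ext with (f := fun s => nu * exp (de * s) * p_ext p n (tau - s)).
  { intros x Hx. rewrite Rmin_left, Rmax_right in Hx by lra. rewrite p_ext_eq; lra. }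
  apply (ex_RInt_continuous (V := R_CompleteNormedModule)). intros x Hx.
  rewrite Rmin_left, Rmax_right in Hx by lra.
  apply continuous_weighted, (continuous_p_ext al be); [exact Hp | lra].
Qed.

Lemma ex_RInt_weighted_lbd_pgf :
  ex_RInt (fun s => nu * exp (de * s) * lbd_pgf al be z (tau - s)) 0 tau.
Proof.
  apply (ex_RInt_continuous (V := R_CompleteNormedModule)). intros x Hx.
  rewrite Rmin_left, Rmax_right in Hx by lra.
  apply continuous_weighted, continuous_lbd_pgf; auto; lra.
Qed.

Lemma is_series_weighted_transition_pgf :
  is_series (fun n => RInt (fun s => nu * exp (de * s) * p n (tau - s)) 0 tau * z ^ n)
    (RInt (fun s => nu * exp (de * s) * lbd_pgf al be z (tau - s)) 0 tau).
Proof.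
  set (C := nu * exp (de * tau)).
  change (is_lim_seq (sum_n (fun n =>
    RInt (fun s => nu * exp (de * s) * p n (tau - s)) 0 tau * z ^ n)) (RInt
    (fun s => nu * exp (de * s) * lbd_pgf al be z (tau - s)) 0 tau)).
  apply (is_lim_seq_RInt_abs_bound
    (fun M s => nu * exp (de * s) * sum_n (fun n => p n (tau - s) * z ^ n) M) _
    (fun M => C * (tau * pgf_error al be z M))); [lra| | exact ex_RInt_weighted_lbd_pgf | |].
  - intros M. eapply is_RInt_ext; [|apply (is_RInt_sum_n
      (fun n s => nu * exp (de * s) * p n (tau - s) * z ^ n))].
    + intros x _.
      transitivity (sum_n (fun n => mult (nu * exp (de * x)) (p n (tau - x) * z ^ n)) M).
      * apply sum_n_ext. intros n. unfold mult; simpl. ring.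
      * exact (sum_n_mult_l _ _ M).
    + intros n. apply is_RInt_mult_r, (RInt_correct (V := R_CompleteNormedModule)).
      apply ex_RInt_weighted_transition.
  - intros M HM x Hx.
    rewrite <- Rmult_minus_distr_l, Rabs_mult, Rabs_right.
    2: { apply Rle_ge, Rmult_le_pos; [lra | apply Rlt_le, exp_pos]. }
    assert (exp (de * x) <= exp (de * tau)).
    { destruct (Req_dec (de * x) (de * tau)) as [->|]; [lra|].
      left. apply exp_increasing. assert (de * x <= de * tau) by nra. lra. }
    assert (Herr := lbd_pgf_partial_sum_error al be z p rates z_range Hp (tau - x) M
      ltac:(lra) HM).
    assert (0 <= pgf_error al be z M) by now apply pgf_error_nonneg.
    unfold C. apply Rmult_le_compat; [| apply Rabs_pos | |].
    + apply Rmult_le_pos; [lra | apply Rlt_le, exp_pos].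
    + apply Rmult_le_compat_l; lra.
    + apply Rle_trans with ((tau - x) * pgf_error al be z M); [exact Herr|].
      apply Rmult_le_compat_r; lra.
  - replace (Finite 0) with (Rbar_mult C 0) by (simpl; f_equal; ring).
    apply is_lim_seq_scal_l.
    replace (Finite 0) with (Rbar_mult tau 0) by (simpl; f_equal; ring).
    apply is_lim_seq_scal_l, is_lim_seq_pgf_error; auto.
Qed.

Lemma mark_law_nonneg n : 0 < clone_mean de nu tau -> 0 <= mark_law de nu tau p n.
Proof.
  intros Hm. unfold mark_law. apply Rmult_le_pos; [|now apply Rlt_le, Rinv_0_lt_compat].
  apply RInt_ge_0; [exact tau_nonneg | apply ex_RInt_weighted_transition|].
  intros x Hx. apply Rmult_le_pos; [apply Rmult_le_pos; [lra | apply Rlt_le, exp_pos]|].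
  apply (lbd_transition_bounds al be p Hp). lra.
Qed.

Lemma is_series_mark_law_pgf : clone_mean de nu tau <> 0 ->
  is_series (fun n => mark_law de nu tau p n * z ^ n)
    (RInt (fun s => nu * exp (de * s) * lbd_pgf al be z (tau - s)) 0 tau
     / clone_mean de nu tau).
Proof.
  intros Hm.
  eapply is_series_ext;
    [|exact (is_series_scal_r (/ clone_mean de nu tau) _ _ is_series_weighted_transition_pgf)].
  intros n. unfold mark_law, scal; simpl; unfold mult; simpl. unfold Rdiv. ring.
Qed.

End MarkLaw.

Lemma tau_of_pos de N : 0 < de -> 1 < N -> 0 < tau_of de N.
Proof.
  intros Hde HN. unfold tau_of. apply Rdiv_lt_0_compat; [|exact Hde].
  rewrite <- ln_1. apply ln_increasing; lra.
Qed.

Lemma exp_tau_of de N : 0 < de -> 1 < N -> exp (de * tau_of de N) = N.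
Proof.
  intros Hde HN. unfold tau_of. replace (de * (ln N / de)) with (ln N) by (field; lra).
  apply exp_ln. lra.
Qed.

Lemma is_RInt_exp_weight de nu tau : 0 < de ->
  is_RInt (fun s => nu * exp (de * s)) 0 tau (nu / de * (exp (de * tau) - 1)).
Proof.
  intros Hde.
  replace (nu / de * (exp (de * tau) - 1))
    with (minus (nu / de * exp (de * tau)) (nu / de * exp (de * 0)))
    by (unfold minus, plus, opp; simpl; rewrite Rmult_0_r, exp_0; ring).
  apply (is_RInt_derive (fun s => nu / de * exp (de * s))).
  - intros x _. auto_derive; [auto | field; lra].
  - intros x _. apply (ex_derive_continuous (V := R_NormedModule)). auto_derive. auto.
Qed.

Lemma clone_mean_tau_of de nu N : 0 < de -> 1 < N ->
  clone_mean de nu (tau_of de N) = nu / de * (N - 1).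
Proof.
  intros Hde HN. unfold clone_mean.
  rewrite (is_RInt_unique _ _ _ _ (is_RInt_exp_weight de nu (tau_of de N) Hde)).
  now rewrite exp_tau_of.
Qed.

Lemma pgf_B_eq_exp de nu al be N p z :
  0 < de -> 0 < nu -> 0 <= be < al -> 1 < N -> is_lbd_transition al be p -> 0 <= z < 1 ->
  pgf_B de nu N p z =
  exp (RInt (fun s => nu * exp (de * s) * lbd_pgf al be z (tau_of de N - s)) 0 (tau_of de N)
       - clone_mean de nu (tau_of de N)).
Proof.
  intros Hde Hnu Hab HN Hp Hz.
  assert (Htau := tau_of_pos de N Hde HN). set (tau := tau_of de N) in *.
  assert (Hm : 0 < clone_mean de nu tau).
  { unfold tau. rewrite clone_mean_tau_of by auto.
    apply Rmult_lt_0_compat; [apply Rdiv_lt_0_compat|]; lra. }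
  set (m := clone_mean de nu tau) in *. assert (Hm0 : m <> 0) by lra.
  set (I z := RInt (fun s => nu * exp (de * s) * lbd_pgf al be z (tau - s)) 0 tau).
  assert (Hpgf : forall z, 0 <= z < 1 ->
    is_series (fun n => mark_law de nu tau p n * z ^ n) (I z / m))
    by (intros z' Hz'; apply is_series_mark_law_pgf; auto; lra).
  unfold pgf_B. transitivity (exp (m * (I z / m - 1))); [|f_equal; unfold I; field; lra].
  apply is_series_unique.
  apply (is_series_compound_poisson _ m z _ (1/2) (I (1/2) / m)); try lra.
  - intros n. apply (mark_law_nonneg al be p de nu tau); auto; lra.
  - now apply Hpgf.
  - apply Hpgf. lra.
Qed.

Section CriticalGrowth.

Variables al be z nu tau : R.
Hypothesis rates : 0 <= be < al.
Hypothesis z_range : 0 <= z < 1.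
Hypothesis tau_nonneg : 0 <= tau.

Let lam := al - be.
Let E := exp (lam * tau).
Let c := al * z - be.

Lemma lbd_pgf_denom_shift s :
  al * (1 - z) * E + c * exp (lam * s) = exp (lam * s) * lbd_pgf_denom al be z (tau - s).
Proof.
  unfold lbd_pgf_denom, E, c. fold lam.
  replace (lam * tau) with (lam * (tau - s) + lam * s) by ring. rewrite exp_plus. ring.
Qed.

(* When the wild type grows at the clone rate [lam], the weight [e^{lam s}]
   cancels the clone's own growth factor [e^{lam (tau - s)}]. *)
Lemma weighted_lbd_pgf_sub_1 s : s <= tau ->
  nu * exp (lam * s) * (lbd_pgf al be z (tau - s) - 1)
  = - nu * lam * (1 - z) * E * exp (lam * s) / (al * (1 - z) * E + c * exp (lam * s)).
Proof.
  intros Hs. rewrite lbd_pgf_denom_shift.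
  assert (HK := lbd_pgf_denom_pos al be z rates z_range (tau - s) ltac:(lra)).
  assert (Hx := exp_pos (lam * s)).
  unfold lbd_pgf. fold lam.
  replace E with (exp (lam * (tau - s)) * exp (lam * s))
    by (unfold E; rewrite <- exp_plus; f_equal; ring).
  field. lra.
Qed.

Lemma is_RInt_weighted_lbd_pgf_sub_1 : c <> 0 ->
  is_RInt (fun s => nu * exp (lam * s) * (lbd_pgf al be z (tau - s) - 1)) 0 tau
    (- nu * (1 - z) * E / c * (ln (lam * E) - ln (al * (1 - z) * E + c))).
Proof.
  intros Hc.
  set (F s := - nu * (1 - z) * E / c * ln (al * (1 - z) * E + c * exp (lam * s))).
  assert (Hpos : forall s, s <= tau -> 0 < al * (1 - z) * E + c * exp (lam * s)).
  { intros s Hs. rewrite lbd_pgf_denom_shift.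
    apply Rmult_lt_0_compat; [apply exp_pos | apply lbd_pgf_denom_pos; auto; lra]. }
  replace (- nu * (1 - z) * E / c * (ln (lam * E) - ln (al * (1 - z) * E + c)))
    with (minus (F tau) (F 0)).
  2: { unfold minus, plus, opp, F; simpl. rewrite Rmult_0_r, exp_0, Rmult_1_r. fold E.
       replace (al * (1 - z) * E + c * E) with (lam * E) by (unfold lam, c; ring).
       ring. }
  apply (is_RInt_derive F); intros x Hx; rewrite Rmin_left, Rmax_right in Hx by lra.
  - rewrite weighted_lbd_pgf_sub_1 by lra. specialize (Hpos x ltac:(lra)).
    unfold F. auto_derive; [lra | field; split; lra].
  - apply (continuous_weighted nu lam tau (fun t => lbd_pgf al be z t - 1)).
    apply (continuous_minus (V := R_NormedModule)); [|apply continuous_const].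
    apply continuous_lbd_pgf; auto; lra.
Qed.

Lemma is_RInt_weighted_lbd_pgf_sub_1_crit : c = 0 ->
  is_RInt (fun s => nu * exp (lam * s) * (lbd_pgf al be z (tau - s) - 1)) 0 tau
    (- (nu / al) * (E - 1)).
Proof.
  intros Hc. assert (Hlam : 0 < lam) by (unfold lam; lra).
  replace (- (nu / al) * (E - 1)) with (- (nu * lam / al) / lam * (exp (lam * tau) - 1))
    by (unfold E; field; lra).
  eapply is_RInt_ext; [|exact (is_RInt_exp_weight lam (- (nu * lam / al)) tau Hlam)].
  intros x Hx. rewrite Rmin_left, Rmax_right in Hx by lra.
  rewrite weighted_lbd_pgf_sub_1 by lra. rewrite Hc.
  assert (0 < E) by apply exp_pos. rewrite Rmult_0_l, Rplus_0_r.
  match goal with |- ?a = ?b => change (@eq R a b) end. field. split; nra.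
Qed.

Lemma RInt_weighted_lbd_pgf_sub_clone_mean D :
  is_RInt (fun s => nu * exp (lam * s) * (lbd_pgf al be z (tau - s) - 1)) 0 tau D ->
  RInt (fun s => nu * exp (lam * s) * lbd_pgf al be z (tau - s)) 0 tau
  - clone_mean lam nu tau = D.
Proof.
  intros HD. assert (Hlam : 0 < lam) by (unfold lam; lra).
  assert (Hm := is_RInt_exp_weight lam nu tau Hlam).
  unfold clone_mean. rewrite (is_RInt_unique _ _ _ _ Hm).
  assert (H := is_RInt_plus _ _ _ _ _ _ HD Hm).
  rewrite (is_RInt_unique _ _ _ (plus D (nu / lam * (exp (lam * tau) - 1)))).
  - unfold plus; simpl. ring.
  - eapply is_RInt_ext; [|exact H]. intros x _. unfold plus; simpl. ring.
Qed.

End CriticalGrowth.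

Section CriticalPgf.

Variables (nu al be N : R) (p : nat -> R -> R) (z : R).
Hypothesis nu_pos : 0 < nu.
Hypothesis rates : 0 <= be < al.
Hypothesis N_gt_1 : 1 < N.
Hypothesis Hp : is_lbd_transition al be p.
Hypothesis z_range : 0 <= z < 1.

Lemma pgf_B_critical_exp D :
  is_RInt (fun s => nu * exp ((al - be) * s)
                    * (lbd_pgf al be z (tau_of (al - be) N - s) - 1)) 0 (tau_of (al - be) N) D ->
  pgf_B (al - be) nu N p z = exp D.
Proof.
  intros HD. rewrite (pgf_B_eq_exp _ _ al be) by (auto; lra). f_equal.
  apply (RInt_weighted_lbd_pgf_sub_clone_mean al be z nu); auto.
Qed.

Lemma pgf_B_critical y : y = (z - be / al) / (1 - be / al) -> y <> 0 ->
  pgf_B (al - be) nu N p z = Rpower (1 - (1 - 1 / N) * y) (N * (nu / al) * (1 - y) / y).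
Proof.
  intros Hy Hy0.
  assert (Htau := tau_of_pos (al - be) N ltac:(lra) N_gt_1).
  assert (HE := exp_tau_of (al - be) N ltac:(lra) N_gt_1).
  assert (Hc : al * z - be = (al - be) * y) by (rewrite Hy; field; split; lra).
  assert (Hc0 : al * z - be <> 0) by (rewrite Hc; apply Rmult_integral_contrapositive; lra).
  assert (Hfac : al * (1 - z) * N + (al * z - be) = (al - be) * N * (1 - (1 - 1 / N) * y)).
  { replace (al * (1 - z) * N) with ((al - (al * z - be) - be) * N) by ring.
    rewrite Hc. field. lra. }
  assert (Hpos : 0 < 1 - (1 - 1 / N) * y).
  { apply (Rmult_lt_reg_l ((al - be) * N)); [nra|]. rewrite Rmult_0_r, <- Hfac.
    assert (0 <= al * (1 - z) * (N - 1)) by (apply Rmult_le_pos; nra). nra. }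
  rewrite (pgf_B_critical_exp _ (is_RInt_weighted_lbd_pgf_sub_1 al be z nu _ rates z_range
    (Rlt_le _ _ Htau) Hc0)).
  rewrite HE, Hfac, (ln_mult ((al - be) * N)) by nra.
  unfold Rpower. f_equal.
  replace (1 - z) with ((al - be - (al * z - be)) / al) by (field; lra).
  rewrite Hc. field. repeat split; lra.
Qed.

Lemma pgf_B_critical_at_q : z = be / al ->
  pgf_B (al - be) nu N p z = exp (- (N * (nu / al)) * (1 - 1 / N)).
Proof.
  intros Hz.
  assert (Htau := tau_of_pos (al - be) N ltac:(lra) N_gt_1).
  assert (Hc0 : al * z - be = 0) by (rewrite Hz; field; lra).
  rewrite (pgf_B_critical_exp _ (is_RInt_weighted_lbd_pgf_sub_1_crit al be z nu _ rates z_range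
    (Rlt_le _ _ Htau) Hc0)).
  rewrite exp_tau_of by lra. f_equal. field. lra.
Qed.

End CriticalPgf.

Lemma is_lim_exp_scal_quot (h : R -> R) a d : is_derive h 0 d -> h 0 = 0 ->
  is_lim (fun x => exp (a * (h x / x))) 0 (exp (a * d)).
Proof.
  intros Hd H0.
  assert (Hq : is_lim (fun x => h x / x) 0 d).
  { apply is_derive_Reals in Hd. apply is_lim_spec. intros eps.
    destruct (Hd eps (cond_pos eps)) as [delta Hdel]. exists delta. intros x Hx Hx0.
    unfold ball in Hx; simpl in Hx. unfold AbsRing_ball, abs, minus, plus, opp in Hx; simpl in Hx.
    rewrite Ropp_0, Rplus_0_r in Hx.
    specialize (Hdel x Hx0 Hx). rewrite Rplus_0_l, H0, Rminus_0_r in Hdel. exact Hdel. }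
  apply (is_lim_comp_continuous (fun x => h x / x) (fun u => exp (a * u)) 0 d Hq).
  apply (ex_derive_continuous (V := R_NormedModule)). auto_derive. auto.
Qed.

Lemma is_lim_Rpower_critical theta phi :
  is_lim (fun y => Rpower (1 - phi * y) (theta * (1 - y) / y)) 0 (exp (- theta * phi)).
Proof.
  replace (- theta * phi) with (theta * - phi) by ring.
  eapply is_lim_ext_loc;
    [|apply (is_lim_exp_scal_quot (fun y => (1 - y) * ln (1 - phi * y)))].
  - exists (mkposreal 1 Rlt_0_1). intros y _ Hy0. unfold Rpower. f_equal. field. exact Hy0.
  - auto_derive; [lra|]. rewrite Rmult_0_r, Ropp_0, Rplus_0_r, ln_1. field.
  - rewrite Rmult_0_r, Rminus_0_r, ln_1. ring.
Qed.

Lemma is_lim_Rpower_critical_xi k N : N <> 0 ->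
  is_lim (fun x => Rpower ((1 - x) / (1 - x / N)) (k / x)) 0 (exp (- k * (1 - 1 / N))).
Proof.
  intros HN. replace (- k * (1 - 1 / N)) with (k * (-1 + 1 / N)) by ring.
  eapply is_lim_ext_loc;
    [|apply (is_lim_exp_scal_quot (fun x => ln ((1 - x) / (1 - x / N))))].
  - exists (mkposreal 1 Rlt_0_1). intros x _ Hx0. unfold Rpower. f_equal. field. exact Hx0.
  - auto_derive.
    + rewrite Rmult_0_l, Ropp_0, !Rplus_0_r, Rmult_1_l. repeat split; lra.
    + field. exact HN.
  - replace ((1 - 0) / (1 - 0 / N)) with 1 by (field; exact HN). apply ln_1.
Qed.

Lemma Rpower_critical_xi_eq q N theta z xi y :
  0 <= q < 1 -> 1 < N -> 0 <= z < 1 ->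
  xi = (q - z) / (1 - z) -> y = (z - q) / (1 - q) -> xi <> 0 ->
  Rpower ((1 - xi) / (1 - xi / N)) (theta / xi)
  = Rpower (1 - (1 - 1 / N) * y) (theta * (1 - y) / y).
Proof.
  intros Hq HN Hz Hxi Hy Hxi0.
  assert (Hzq : z - q <> 0).
  { intros H. apply Hxi0. rewrite Hxi. replace (q - z) with 0 by lra. unfold Rdiv. ring. }
  assert (Hpos : 0 < 1 - (1 - 1 / N) * y).
  { rewrite Hy. apply (Rmult_lt_reg_l (N * (1 - q))); [nra|]. rewrite Rmult_0_r.
    replace (N * (1 - q) * (1 - (1 - 1 / N) * ((z - q) / (1 - q))))
      with ((N - 1) * (1 - z) + (1 - q)) by (field; lra).
    nra. }
  assert (Hbase : (1 - xi) / (1 - xi / N) = / (1 - (1 - 1 / N) * y)).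
  { rewrite Hxi, Hy. field. repeat split; try lra.
    replace (N * (1 - z) - (q - z)) with ((N - 1) * (1 - z) + (1 - q)) by ring. nra. }
  assert (Hexp : theta / xi = - (theta * (1 - y) / y)).
  { rewrite Hxi, Hy. field. repeat split; lra. }
  rewrite Hbase, Hexp. unfold Rpower. rewrite ln_Rinv by exact Hpos. f_equal. ring.
Qed.

Lemma Rdiv_eq_0_iff a b : b <> 0 -> (a / b = 0 <-> a = 0).
Proof.
  intros Hb. split; intros H.
  - replace a with (a / b * b) by (field; exact Hb). rewrite H. ring.
  - rewrite H. unfold Rdiv. ring.
Qed.

Lemma pgf_B_0 de nu N p : pgf_B de nu N p 0 = law_B de nu N p 0.
Proof.
  apply is_series_unique.
  replace (law_B de nu N p 0) with (law_B de nu N p 0 * 0 ^ 0) by (simpl; ring).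
  apply (is_series_head (fun n => law_B de nu N p n * 0 ^ n)). intros n. simpl. ring.
Qed.

Theorem mainTheorem5 (de nu al be N : R) (p : nat -> R -> R) :
  0 < de -> 0 < nu -> 0 <= be -> be < al -> de = al - be -> 1 < N ->
  is_lbd_transition al be p ->
  let q := be / al in
  let mu := nu / al in
  let phi := 1 - 1 / N in
  let theta := N * mu in
  let G := fun xi => Rpower ((1 - xi) / (1 - xi / N)) (N * mu / xi) in
  let F := fun y => Rpower (1 - phi * y) (theta * (1 - y) / y) in
  (forall z, 0 <= z < 1 ->
     let xi := (q - z) / (1 - z) in
     let y := (z - q) / (1 - q) in
     (xi <> 0 -> pgf_B de nu N p z = G xi) /\
     (xi = 0 -> is_lim G 0 (pgf_B de nu N p z)) /\
     (y <> 0 -> pgf_B de nu N p z = F y) /\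
     (y = 0 -> is_lim F 0 (pgf_B de nu N p z))) /\
  (0 < q -> law_B de nu N p 0 = Rpower (1 + q * phi / (1 - q)) (- theta / q)).
Proof.
  intros Hde Hnu Hbe Hab -> HN Hp q mu phi theta G F.
  assert (Hrates : 0 <= be < al) by lra.
  assert (Hq : 0 <= q < 1).
  { unfold q. split; [apply Rdiv_le_0_compat; lra|].
    apply Rmult_lt_reg_r with al; [lra|]. unfold Rdiv. rewrite Rmult_assoc, Rinv_l; lra. }
  assert (Hxi0 : forall z, z < 1 -> (q - z) / (1 - z) = 0 -> z = q)
    by (intros z Hz H; apply Rdiv_eq_0_iff in H; lra).
  assert (Hy0 : forall z, (z - q) / (1 - q) = 0 -> z = q)
    by (intros z H; apply Rdiv_eq_0_iff in H; lra).
  assert (HF : forall z, 0 <= z < 1 -> (z - q) / (1 - q) <> 0 ->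
    pgf_B (al - be) nu N p z = F ((z - q) / (1 - q)))
    by (intros z Hz Hy; now apply pgf_B_critical).
  assert (Hat_q : pgf_B (al - be) nu N p q = exp (- theta * phi))
    by (now apply pgf_B_critical_at_q).
  split.
  - intros z Hz xi y. repeat split; intros H.
    + unfold G. fold theta. rewrite (Rpower_critical_xi_eq q N theta z xi y) by auto.
      apply HF; [exact Hz|]. intros Hy. apply H, Rdiv_eq_0_iff; [lra|].
      apply Hy0 in Hy. lra.
    + rewrite (Hxi0 z (proj2 Hz) H), Hat_q. apply is_lim_Rpower_critical_xi. lra.
    + now apply HF.
    + rewrite (Hy0 z H), Hat_q. apply is_lim_Rpower_critical.
  - intros Hq0. rewrite <- pgf_B_0, HF.
    + unfold F. f_equal; field; lra.
    + lra.
    + intros H. apply Hy0 in H. lra.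
Qed.
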